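(* Suppose the following statement (A) holds: for all positive integers $n,r$, every simple edge-coloured graph $G$ with $n$ vertices and $n$ colours, in which each colour class has size at least $r$, contains a cycle $C$ of length at most $\lceil n/r\rceil$ such that no two edges of $C$ that share a vertex have the same colour. Then the following statement (B) holds: for all positive integers $n,r$, every simple digraph with $n$ vertices and minimum outdegree at least $r$ contains a directed cycle of length at most $\lceil n/r\rceil$.
   Context: Graphs may have parallel edges. An edge-coloured graph is simple if no colour class contains two parallel edges. A colour class is the set of edges receiving a given colour. A digraph is simple if for all vertices $u,v$ there is at most one arc from $u$ to $v$. *)

From mathcomp Require Import all_boot.
Set Implicit Arguments. Unset Strict Implicit. Unset Printing Implicit Defensive.

(* ceil (n / r) for r > 0 *)
Definition ceil_div (n r : nat) : nat := (n + r - 1) %/ r.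

(* A multigraph on vertex type V with finite edge type E: each edge e has
   endpoints ends e (an unordered pair, stored as an ordered pair). *)
Section ECGraph.
Variables (V E C : finType) (ends : E -> V * V) (col : E -> C).

Definition loopless := forall e, (ends e).1 != (ends e).2.

Definition joins (e : E) (u v : V) : bool :=
  ((ends e).1 == u) && ((ends e).2 == v) || ((ends e).1 == v) && ((ends e).2 == u).

Definition is_end (v : V) (e : E) : bool := ((ends e).1 == v) || ((ends e).2 == v).

Definition parallel (e f : E) : bool := joins f (ends e).1 (ends e).2.

Definition simple_ecol :=
  forall e f, e != f -> col e = col f -> ~~ parallel e f.

Definition colour_class (c : C) : {set E} := [set e | col e == c].

Definition is_cycle (k : nat) (vs : 'I_k -> V) (es : 'I_k -> E) :=
  2 <= k /\ injective vs /\ injective es /\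
  forall i : 'I_k, joins (es i) (vs i) (vs (ordS i)).

Definition properly_coloured (k : nat) (es : 'I_k -> E) :=
  forall i j : 'I_k, i != j -> (exists v, is_end v (es i) && is_end v (es j)) ->
    col (es i) != col (es j).
End ECGraph.

(* A simple digraph on V is a relation a : rel V (at most one arc u -> v),
   loopless (irreflexive). *)
Definition outdeg (V : finType) (a : rel V) (x : V) : nat := #|[set y | a x y]|.

Definition is_dicycle (V : finType) (a : rel V) (k : nat) (vs : 'I_k -> V) :=
  0 < k /\ injective vs /\ forall i : 'I_k, a (vs i) (vs (ordS i)).

Definition statementA : Prop :=
  forall (n r : nat), 0 < n -> 0 < r ->
  forall (E : finType) (ends : E -> 'I_n * 'I_n) (col : E -> 'I_n),
    loopless ends -> simple_ecol ends col ->
    (forall c : 'I_n, r <= #|colour_class col c|) ->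
    exists (k : nat) (vs : 'I_k -> 'I_n) (es : 'I_k -> E),
      [/\ is_cycle ends vs es, k <= ceil_div n r & properly_coloured ends col es].

Definition statementB : Prop :=
  forall (n r : nat), 0 < n -> 0 < r ->
  forall (a : rel 'I_n), irreflexive a ->
    (forall x : 'I_n, r <= outdeg a x) ->
    exists (k : nat) (vs : 'I_k -> 'I_n),
      @is_dicycle _ a k vs /\ k <= ceil_div n r.

From mathcomp Require Import all_boot.
From mathcomp Require Import zify.
Set Implicit Arguments. Unset Strict Implicit. Unset Printing Implicit Defensive.

(* Colour every arc of the digraph by its tail. Colour class x is then the set
   of arcs leaving x, so it has size outdeg x, and since the digraph is simple
   the resulting edge-coloured graph is simple. In a properly coloured cycle two
   consecutive edges never leave the same vertex, which forces all edges of the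
   cycle to be oriented the same way around it: read in that direction the
   cycle is a directed cycle of the same length. *)

Lemma ordS_neq k (i : 'I_k) : 2 <= k -> ordS i != i.
Proof.
move=> k_ge2; apply/eqP => /(congr1 (@nat_of_ord k)) /=.
have := ltn_ord i; case: (ltngtP i.+1 k) => [lt_iSk|//|eq_iSk] _.
- by rewrite modn_small //; lia.
- by rewrite eq_iSk modnn; lia.
Qed.

Lemma iter_ordS k (i : 'I_k) m : nat_of_ord (iter m (@ordS k) i) = (i + m) %% k.
Proof.
elim: m => [|m IHm] /=; first by rewrite addn0 modn_small.
by rewrite IHm addnS -addn1 modnDml addn1.
Qed.

Lemma ordS_ind k (P : 'I_k -> Prop) (i0 : 'I_k) :
  (forall i, P i -> P (ordS i)) -> P i0 -> forall j, P j.
Proof.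
move=> PS Pi0 j.
have -> : j = iter (j + k - i0) (@ordS k) i0.
  apply/ord_inj; rewrite iter_ordS.
  have := ltn_ord i0; have := ltn_ord j => lt_jk lt_i0k.
  by rewrite (_ : i0 + _ = j + k) ?modnDr ?modn_small //; lia.
by elim: (j + k - i0) => //= m; apply: PS.
Qed.

Lemma rev_ordS k (i : 'I_k) : ordS (rev_ord (ordS i)) = rev_ord i.
Proof.
apply/ord_inj => /=; have := ltn_ord i.
case: (ltngtP i.+1 k) => [lt_iSk|//|eq_iSk] _.
- rewrite (modn_small lt_iSk) (_ : (k - i.+2).+1 = k - i.+1); last lia.
  by rewrite modn_small //; lia.
- by rewrite eq_iSk modnn subn1 prednK ?modnn; lia.
Qed.

Section ArcGraph.
Variables (V : finType) (a : rel V).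
Hypothesis a_irr : irreflexive a.

Definition arc := {p : V * V | a p.1 p.2}.
Definition arc_ends (e : arc) : V * V := val e.
Definition arc_tail (e : arc) : V := (val e).1.

Lemma arc_loopless : loopless arc_ends.
Proof.
by move=> [[x y] /= axy]; apply: contraTneq axy => eq_xy; rewrite eq_xy a_irr.
Qed.

Lemma arc_simple : simple_ecol arc_ends arc_tail.
Proof.
move=> [[x y] axy] [[x' y'] axy'] /=.
rewrite /arc_tail /parallel /joins /= => ne_e eq_x; subst x.
apply/negP => /orP [/andP [_ /eqP eq_y] | /andP [/eqP eq_x' _]].
- by move: ne_e; rewrite -(inj_eq val_inj) /= eq_y eqxx.
- by move: (axy); rewrite eq_x' a_irr.
Qed.

Lemma outdeg_le_colour_class x : outdeg a x <= #|colour_class arc_tail x|.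
Proof.
apply: (leq_trans _ (leq_imset_card (fun e : arc => (val e).2) _)).
apply/subset_leq_card/subsetP => y; rewrite inE => axy.
by apply/imsetP; exists (exist _ (x, y) axy); rewrite // inE.
Qed.

Section Cycle.
Variables (k : nat) (vs : 'I_k -> V) (es : 'I_k -> arc).
Hypotheses (es_cycle : is_cycle arc_ends vs es)
           (es_proper : properly_coloured arc_ends arc_tail es).

Let forward i := val (es i) = (vs i, vs (ordS i)).
Let backward i := val (es i) = (vs (ordS i), vs i).

Lemma arc_cycle_orientation i : forward i \/ backward i.
Proof.
have [_ [_ [_ /(_ i)]]] := es_cycle; rewrite /joins /arc_ends /forward /backward.
by case: (val (es i)) => x y /orP [] /andP [/= /eqP -> /eqP ->]; [left | right].
Qed.

Lemma backward_ordS i : backward i -> backward (ordS i).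
Proof.
move=> bw_i; have [fw_Si|//] := arc_cycle_orientation (ordS i).
have [k_ge2 _] := es_cycle.
have : arc_tail (es (ordS i)) != arc_tail (es i).
  apply: es_proper (ordS_neq i k_ge2) _.
  by exists (vs (ordS i)); rewrite /is_end /arc_ends bw_i fw_Si /= !eqxx ?orbT.
by rewrite /arc_tail bw_i fw_Si eqxx.
Qed.

Lemma properly_coloured_arc_cycle_dicycle :
  exists ws : 'I_k -> V, is_dicycle a ws.
Proof.
have [k_ge2 [vs_inj _]] := es_cycle.
have k_gt0 : 0 < k by lia.
have arc_es i : a (val (es i)).1 (val (es i)).2 := valP (es i).
case: (boolP [exists i, val (es i) == (vs (ordS i), vs i)]) => [|/existsPn no_bw].
- case/existsP => i0 /eqP /(ordS_ind backward_ordS) bw.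
  exists (vs \o @rev_ord k); split=> //; split.
    exact: inj_comp vs_inj (@rev_ord_inj k).
  move=> i /=; have := arc_es (rev_ord (ordS i)).
  by rewrite (bw (rev_ord (ordS i))) /= rev_ordS.
- exists vs; split; [by [] | split=> // i].
  have [fw_i|bw_i] := arc_cycle_orientation i.
    by move: (arc_es i); rewrite fw_i.
  by move: (no_bw i); rewrite bw_i eqxx.
Qed.

End Cycle.
End ArcGraph.

Theorem mainTheorem1 : statementA -> statementB.
Proof.
move=> hA n r n_gt0 r_gt0 a a_irr outdeg_ge.
have col_ge c : r <= #|colour_class (@arc_tail _ a) c|.
  exact: leq_trans (outdeg_ge c) (outdeg_le_colour_class a c).
have [k [vs [es [cyc k_le proper]]]] :=
  hA n r n_gt0 r_gt0 _ _ _ (arc_loopless a_irr) (arc_simple a_irr) col_ge.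
have [ws dicyc] := properly_coloured_arc_cycle_dicycle cyc proper.
by exists k, ws.
Qed.
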